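(* There exists a unique $\mu_{\mathrm{cr}}>0$ such that: (a) the problem $(\dot w_p/H_p^3)_p-\mu\rho_p\dot w=0$ on $(-1,0)$, $\dot w(-1)=0$, $-\dot w_p(0)/H_p(0)^3+\mu\rho(0)\dot w(0)=0$ has a nontrivial solution $\dot w$ for $\mu=\mu_{\mathrm{cr}}$, and one can take $\dot w=\Phi(\cdot;\mu_{\mathrm{cr}})$; (b) if $0\le\mu\le\mu_{\mathrm{cr}}$, then $\Phi(p;\mu)>0$ for $-1<p\le0$ and $\Phi_p(p;\mu)>0$ for $-1\le p\le0$; (c) for $0\le\mu<\mu_{\mathrm{cr}}$, $A(\mu)<0$.
   Context: Fix $\alpha\in(0,1)$, $\rho\in C^{2+\alpha}([-1,0])$ with $\rho>0$ and $\rho_p\le0$, and $H\in C^{3+\alpha}([-1,0])$ with $H_p>0$. For $\mu\ge0$, $\Phi(\cdot;\mu)$ denotes the solution of the initial value problem $(\Phi_p/H_p^3)_p-\mu\rho_p\Phi=0$ on $(-1,0)$, $\Phi(-1)=0$, $\Phi_p(-1)=1$, and $A(\mu):=-\Phi_p(0;\mu)/H_p(0)^3+\mu\rho(0)\Phi(0;\mu)$. *)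

From Stdlib Require Import Reals Lra.
Open Scope R_scope.

Definition deriv_within (a b : R) (f : R -> R) (x l : R) : Prop :=
  forall eps, 0 < eps -> exists delta, 0 < delta /\
    forall y, a <= y <= b -> y <> x -> Rabs (y - x) < delta ->
      Rabs ((f y - f x) / (y - x) - l) < eps.

Definition deriv_at (f : R -> R) (x l : R) : Prop :=
  forall eps, 0 < eps -> exists delta, 0 < delta /\
    forall y, y <> x -> Rabs (y - x) < delta ->
      Rabs ((f y - f x) / (y - x) - l) < eps.

Definition holder_on (a b alpha : R) (g : R -> R) : Prop :=
  exists C, 0 <= C /\ forall x y, a <= x <= b -> a <= y <= b -> x <> y ->
    Rabs (g x - g y) <= C * Rpower (Rabs (x - y)) alpha.

Definition Ckalpha (k : nat) (alpha a b : R) (f : R -> R) : Prop :=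
  exists fs : nat -> R -> R,
    (forall x, a <= x <= b -> fs 0%nat x = f x) /\
    (forall j x, (j < k)%nat -> a <= x <= b ->
        deriv_within a b (fs j) x (fs (S j) x)) /\
    holder_on a b alpha (fs k).

Definition ode_sol (Hp rhop : R -> R) (mu : R) (w wp : R -> R) : Prop :=
  (forall p, -1 <= p <= 0 -> deriv_within (-1) 0 w p (wp p)) /\
  (forall p, -1 <= p <= 0 ->
     forall eps, 0 < eps -> exists delta, 0 < delta /\
       forall x, -1 <= x <= 0 -> Rabs (x - p) < delta -> Rabs (wp x - wp p) < eps) /\
  (forall p, -1 < p < 0 ->
     deriv_at (fun q => wp q / (Hp q ^ 3)) p (mu * rhop p * w p)).

Definition bvp_sol (rho Hp rhop : R -> R) (mu : R) (w wp : R -> R) : Prop :=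
  ode_sol Hp rhop mu w wp /\ w (-1) = 0 /\
  - wp 0 / (Hp 0 ^ 3) + mu * rho 0 * w 0 = 0.

Definition nontrivial (w : R -> R) : Prop := exists p, -1 <= p <= 0 /\ w p <> 0.

Definition Afun (rho Hp : R -> R) (Phi Phip : R -> R -> R) (mu : R) : R :=
  - Phip 0 mu / (Hp 0 ^ 3) + mu * rho 0 * Phi 0 mu.

From Stdlib Require Import Reals Lra Psatz Lia Classical.
From Coquelicot Require Import Coquelicot.
Open Scope R_scope.

(* Write the equation as the first-order system [Phi' = H_p^3 F], [F' = mu rho_p Phi] for [Phi] and
   its flux [F = Phi_p / H_p^3], with [Phi(-1) = 0] and [F(-1) > 0]. While [F >= 0], [Phi] is
   nondecreasing and nonnegative, so [rho_p <= 0] makes [F] nonincreasing. Gronwall estimates make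
   [Phi] and [F] Lipschitz in [mu] uniformly in [p], hence the set of [mu] with [F > 0] on [-1,0]
   and [A(mu) < 0] is relatively open in [[0,oo)]. It contains [0], and it misses every [mu] with
   [mu rho(0) min H_p^3 >= 1], because then the mean value theorem gives
   [mu rho(0) Phi(0) >= F(0)]. Let [mu_cr] be the supremum of the [m] such that [[0,m]] lies in
   this set. In the limit [F >= 0] and [A <= 0] at [mu_cr]; [F] cannot vanish, as it would then
   vanish at [0] and give [A = mu_cr rho(0) Phi(0) > 0]; and [A(mu_cr) < 0] would contradict
   maximality. Hence [A(mu_cr) = 0]. *)

Lemma derivable_pt_lim_exp_decay K x0 x :
  derivable_pt_lim (fun y => exp (- K * (y - x0))) x (- K * exp (- K * (x - x0))).
Proof.
  replace (- K * exp (- K * (x - x0))) with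
    (exp (- K * (x - x0)) * (0 * (x - x0) + - K * (1 - 0))) by ring.
  apply (derivable_pt_lim_comp (fun y => - K * (y - x0)) exp); [| apply derivable_pt_lim_exp].
  apply (derivable_pt_lim_mult (fun _ => - K) (fun y => y - x0)); [apply derivable_pt_lim_const|].
  apply (derivable_pt_lim_minus (fun y => y) (fun _ => x0));
    [apply derivable_pt_lim_id | apply derivable_pt_lim_const].
Qed.

Section Interval.

Variables a b : R.
Hypothesis a_lt_b : a < b.

(* Continuity relative to [a,b] is encoded as ordinary continuity of [f] precomposed with the
   retraction [clamp] of R onto [a,b], the form taken by the extreme value and mean value
   theorems of the libraries. *)
Definition clamp (x : R) : R := Rmin b (Rmax a x).

Definition continuity_on (f : R -> R) : Prop := continuity (fun y => f (clamp y)).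

Definition continuous_within (f : R -> R) (x : R) : Prop :=
  forall eps, 0 < eps -> exists delta, 0 < delta /\
    forall y, a <= y <= b -> Rabs (y - x) < delta -> Rabs (f y - f x) < eps.

Lemma clamp_in x : a <= clamp x <= b.
Proof. unfold clamp, Rmin, Rmax; repeat destruct Rle_dec; lra. Qed.

Lemma clamp_id x : a <= x <= b -> clamp x = x.
Proof. intros; unfold clamp, Rmin, Rmax; repeat destruct Rle_dec; lra. Qed.

Lemma clamp_lipschitz x y : Rabs (clamp x - clamp y) <= Rabs (x - y).
Proof.
  unfold clamp, Rmin, Rmax; repeat destruct Rle_dec; unfold Rabs; repeat destruct Rcase_abs; lra.
Qed.

Lemma continuity_on_of_within f :
  (forall x, a <= x <= b -> continuous_within f x) -> continuity_on f.
Proof.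
  intros Hf x eps Heps.
  destruct (Hf (clamp x) (clamp_in x) eps Heps) as [d [Hd Hy]].
  exists d; split; [exact Hd|]. intros y [_ Hyx].
  apply Hy; [apply clamp_in|]. eapply Rle_lt_trans; [apply clamp_lipschitz | exact Hyx].
Qed.

Lemma continuity_on_clamp : continuity clamp.
Proof.
  apply (continuity_on_of_within (fun z => z)).
  intros x _ eps Heps. exists eps; split; auto.
Qed.

Lemma continuous_within_ext f g x : (forall y, a <= y <= b -> f y = g y) -> a <= x <= b ->
  continuous_within f x -> continuous_within g x.
Proof.
  intros E Hx H eps He. destruct (H eps He) as [d [Hd K]]. exists d; split; auto.
  intros y Hy Hyx. rewrite <- (E y Hy), <- (E x Hx). auto.
Qed.

Lemma deriv_within_ext f g x l : (forall y, a <= y <= b -> f y = g y) -> a <= x <= b ->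
  deriv_within a b f x l -> deriv_within a b g x l.
Proof.
  intros E Hx H eps He. destruct (H eps He) as [d [Hd K]]. exists d; split; auto.
  intros y Hy Hyx Hyd. rewrite <- (E y Hy), <- (E x Hx). auto.
Qed.

Lemma deriv_within_continuous f x l : deriv_within a b f x l -> continuous_within f x.
Proof.
  intros Hd eps Heps.
  destruct (Hd 1 Rlt_0_1) as [d [Hd0 Hdy]].
  assert (HL : 0 < Rabs l + 1) by (pose proof (Rabs_pos l); lra).
  exists (Rmin d (eps / (Rabs l + 1))). split.
  { apply Rmin_pos; [exact Hd0 | apply Rdiv_lt_0_compat; lra]. }
  intros y Hy Hyx.
  destruct (Req_dec y x) as [->|Hne]; [rewrite Rminus_eq_0, Rabs_R0; exact Heps|].
  assert (Hq := Hdy y Hy Hne (Rlt_le_trans _ _ _ Hyx (Rmin_l _ _))).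
  assert (Hyx' := Rlt_le_trans _ _ _ Hyx (Rmin_r _ _)).
  replace (f y - f x) with ((f y - f x) / (y - x) * (y - x)) by (field; lra).
  rewrite Rabs_mult. set (q := (f y - f x) / (y - x)) in *.
  assert (Hql : Rabs q < Rabs l + 1).
  { replace q with ((q - l) + l) by ring. pose proof (Rabs_triang (q - l) l). lra. }
  assert (HE : (Rabs l + 1) * (eps / (Rabs l + 1)) = eps) by (field; lra).
  pose proof (Rabs_pos q). pose proof (Rabs_pos (y - x)). nra.
Qed.

Lemma deriv_within_interior f x l : a < x < b -> deriv_within a b f x l -> derivable_pt_lim f x l.
Proof.
  intros Hx Hd eps Heps. destruct (Hd eps Heps) as [d [Hd0 H]].
  assert (Hr : 0 < Rmin d (Rmin (x - a) (b - x))) by (repeat apply Rmin_pos; lra).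
  exists (mkposreal _ Hr). intros t Ht0 Ht. simpl in Ht.
  pose proof (Rmin_l d (Rmin (x - a) (b - x))). pose proof (Rmin_r d (Rmin (x - a) (b - x))).
  pose proof (Rmin_l (x - a) (b - x)). pose proof (Rmin_r (x - a) (b - x)).
  specialize (H (x + t)). replace (x + t - x) with t in H by ring. apply H; [| lra | lra].
  unfold Rabs in Ht; destruct Rcase_abs; lra.
Qed.

Lemma deriv_within_unique f x l1 l2 : a <= x <= b ->
  deriv_within a b f x l1 -> deriv_within a b f x l2 -> l1 = l2.
Proof.
  intros Hx H1 H2. destruct (Req_dec l1 l2) as [|Hne]; [assumption|]. exfalso.
  assert (He : 0 < Rabs (l1 - l2) / 2) by (pose proof (Rabs_pos_lt (l1 - l2) ltac:(lra)); lra).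
  destruct (H1 _ He) as [d1 [Hd1 K1]]. destruct (H2 _ He) as [d2 [Hd2 K2]].
  set (t := Rmin (Rmin d1 d2) (b - a) / 2).
  assert (Ht : 0 < Rmin (Rmin d1 d2) (b - a)) by (repeat apply Rmin_pos; lra).
  pose proof (Rmin_l (Rmin d1 d2) (b - a)). pose proof (Rmin_r (Rmin d1 d2) (b - a)).
  pose proof (Rmin_l d1 d2). pose proof (Rmin_r d1 d2).
  assert (exists y, a <= y <= b /\ y <> x /\ Rabs (y - x) = t) as [y [Hy [Hyx Hyt]]].
  { destruct (Rle_dec x ((a + b) / 2)).
    - exists (x + t). replace (x + t - x) with t by ring. rewrite Rabs_right; unfold t; lra.
    - exists (x - t). replace (x - t - x) with (- t) by ring.
      rewrite Rabs_Ropp, Rabs_right; unfold t; lra. }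
  specialize (K1 y Hy Hyx ltac:(unfold t in Hyt; lra)).
  specialize (K2 y Hy Hyx ltac:(unfold t in Hyt; lra)).
  revert K1 K2. unfold Rabs; repeat destruct Rcase_abs; lra.
Qed.

Lemma continuity_on_max f : continuity_on f -> exists M, forall x, a <= x <= b -> f x <= M.
Proof.
  intros Hf.
  destruct (continuity_ab_maj (fun y => f (clamp y)) a b ltac:(lra) (fun c _ => Hf c)) as [m [Hm _]].
  exists (f (clamp m)). intros x Hx. rewrite <- (clamp_id x Hx). apply Hm, Hx.
Qed.

Lemma continuity_on_pos_min f : continuity_on f -> (forall x, a <= x <= b -> 0 < f x) ->
  exists m, 0 < m /\ forall x, a <= x <= b -> m <= f x.
Proof.
  intros Hf Hpos.
  destruct (continuity_ab_min (fun y => f (clamp y)) a b ltac:(lra) (fun c _ => Hf c)) as [m [Hm _]].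
  exists (f (clamp m)). split; [apply Hpos, clamp_in|].
  intros x Hx. rewrite <- (clamp_id x Hx). apply Hm, Hx.
Qed.

Lemma continuity_on_locally_pos f x : continuity_on f -> a <= x <= b -> 0 < f x ->
  exists d, 0 < d /\ forall y, a <= y <= b -> Rabs (y - x) < d -> 0 < f y.
Proof.
  intros Hf Hx Hfx.
  destruct (Hf x (f x) Hfx) as [d [Hd K]]. exists d; split; [exact Hd|].
  intros y Hy Hyx. destruct (Req_dec y x) as [->|Hne]; [exact Hfx|].
  specialize (K y (conj (conj I (not_eq_sym Hne)) Hyx)). simpl in K. unfold R_dist in K.
  rewrite !clamp_id in K by assumption. revert K. unfold Rabs; destruct Rcase_abs; lra.
Qed.

Lemma MVT_on f df x y : a <= x < y -> y <= b -> continuity_on f ->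
  (forall z, x < z < y -> derivable_pt_lim f z (df z)) ->
  exists c, x <= c <= y /\ f y - f x = df c * (y - x).
Proof.
  intros Hx Hy Hc Hd.
  destruct (MVT_gen (fun z => f (clamp z)) x y df) as [c [Hc1 Hc2]]; cbv zeta in *.
  - rewrite Rmin_left, Rmax_right by lra. intros z Hz.
    apply is_derive_ext_loc with f; [| apply is_derive_Reals, Hd; lra].
    assert (Hr : 0 < Rmin (z - x) (y - z)) by (apply Rmin_pos; lra).
    exists (mkposreal _ Hr). intros u Hu.
    unfold ball in Hu; simpl in Hu; unfold AbsRing_ball, abs, minus, plus, opp in Hu; simpl in Hu.
    pose proof (Rmin_l (z - x) (y - z)); pose proof (Rmin_r (z - x) (y - z)).
    rewrite clamp_id; [reflexivity|]. unfold Rabs in Hu; destruct Rcase_abs; lra.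
  - intros z _; apply Hc.
  - rewrite Rmin_left, Rmax_right in Hc1 by lra. exists c; split; [exact Hc1|].
    rewrite !clamp_id in Hc2 by lra. exact Hc2.
Qed.

Lemma gronwall_on D dD K c p : 0 < K -> 0 <= c -> 0 <= D a -> a <= p <= b ->
  continuity_on D -> (forall x, a < x < b -> derivable_pt_lim D x (dD x)) ->
  (forall x, a <= x <= b -> dD x <= K * D x + c) ->
  D p <= exp (K * (b - a)) * (D a + c / K).
Proof.
  intros HK Hc HDa Hp HDc HDd Hineq.
  assert (HcK : 0 <= c / K) by (apply Rdiv_le_0_compat; lra).
  assert (Hgrowth : exp (K * (p - a)) <= exp (K * (b - a))).
  { destruct (Req_dec p b) as [->|]; [lra|]. left; apply exp_increasing; nra. }
  assert (Hone : 1 <= exp (K * (p - a))).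
  { rewrite <- exp_0. destruct (Req_dec p a) as [->|]; [right; f_equal; ring|].
    left; apply exp_increasing; nra. }
  destruct (Req_dec p a) as [->|Hne]; [nra|].
  (* the weighted quantity [exp (-K (y - a)) (D y + c/K)] is nonincreasing *)
  destruct (MVT_on (fun y => exp (- K * (y - a)) * (D y + c / K))
                   (fun y => exp (- K * (y - a)) * (dD y - K * (D y + c / K))) a p)
    as [z [Hz HG]]; [lra | lra | | |].
  - intros x. apply continuity_pt_mult.
    + apply (continuity_pt_comp clamp (fun y => exp (- K * (y - a))));
        [apply continuity_on_clamp |].
      apply derivable_continuous_pt. exists (- K * exp (- K * (clamp x - a))).
      apply derivable_pt_lim_exp_decay.
    + apply continuity_pt_plus; [apply HDc | apply continuity_pt_const; intros ? ?; reflexivity].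
  - intros x Hx.
    replace (exp (- K * (x - a)) * (dD x - K * (D x + c / K))) with
      (- K * exp (- K * (x - a)) * (D x + c / K) + exp (- K * (x - a)) * (dD x + 0)) by ring.
    apply (derivable_pt_lim_mult (fun y => exp (- K * (y - a))) (fun y => D y + c / K));
      [apply derivable_pt_lim_exp_decay |].
    apply derivable_pt_lim_plus; [apply HDd; lra | apply derivable_pt_lim_const].
  - cbv beta in HG. replace (- K * (a - a)) with 0 in HG by ring. rewrite exp_0 in HG.
    assert (Hdec : exp (- K * (z - a)) * (dD z - K * (D z + c / K)) <= 0).
    { pose proof (Hineq z ltac:(lra)). pose proof (exp_pos (- K * (z - a))).
      replace (K * (D z + c / K)) with (K * D z + c) by (field; lra). nra. }
    assert (Hinv : exp (K * (p - a)) * exp (- K * (p - a)) = 1).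
    { rewrite <- exp_plus. replace (K * (p - a) + - K * (p - a)) with 0 by ring. apply exp_0. }
    assert (HGp : exp (- K * (p - a)) * (D p + c / K) <= D a + c / K) by nra.
    replace (D p) with (exp (K * (p - a)) * (exp (- K * (p - a)) * (D p + c / K)) - c / K)
      by (rewrite <- Rmult_assoc, Hinv; ring).
    nra.
Qed.

Lemma Ckalpha_deriv_continuity k alpha f fp : (1 < k)%nat -> Ckalpha k alpha a b f ->
  (forall p, a <= p <= b -> deriv_within a b f p (fp p)) -> continuity_on fp.
Proof.
  intros Hk [fs [Hf0 [Hfs _]]] Hf. apply continuity_on_of_within. intros x Hx.
  assert (Hfs1 : forall y, a <= y <= b -> fs 1%nat y = fp y).
  { intros y Hy. apply (deriv_within_unique f y); [exact Hy | | exact (Hf y Hy)].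
    apply (deriv_within_ext (fs 0%nat)); [exact Hf0 | exact Hy | apply Hfs; [lia | exact Hy]]. }
  apply (continuous_within_ext (fs 1%nat)); [exact Hfs1 | exact Hx |].
  apply (deriv_within_continuous _ _ (fs 2%nat x)), Hfs; [lia | exact Hx].
Qed.

End Interval.

Lemma Rabs_le_of_sqr_le L x d : 0 <= L -> x * x <= L * (d * d) -> Rabs x <= (L + 1) * Rabs d.
Proof.
  intros HL H. destruct (Rle_dec (Rabs x) ((L + 1) * Rabs d)) as [|Hn]; [assumption|].
  exfalso. apply Rnot_le_lt in Hn.
  pose proof (Rsqr_abs x) as Ex. pose proof (Rsqr_abs d) as Ed. unfold Rsqr in Ex, Ed.
  rewrite Ex, Ed in H. pose proof (Rabs_pos d).
  assert (0 <= (L + 1) * Rabs d) by nra.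
  assert (((L + 1) * Rabs d) * ((L + 1) * Rabs d) < Rabs x * Rabs x)
    by (apply Rmult_le_0_lt_compat; assumption).
  assert (L * (Rabs d * Rabs d) <= ((L + 1) * Rabs d) * ((L + 1) * Rabs d)) by nra.
  lra.
Qed.

Lemma continuity_pt_sum_sqr f g x : continuity_pt f x -> continuity_pt g x ->
  continuity_pt (fun y => f y * f y + g y * g y) x.
Proof.
  intros Hf Hg.
  apply (continuity_pt_plus (fun y => f y * f y) (fun y => g y * g y));
    apply continuity_pt_mult; assumption.
Qed.

Lemma derivable_pt_lim_sum_sqr f g x df dg :
  derivable_pt_lim f x df -> derivable_pt_lim g x dg ->
  derivable_pt_lim (fun y => f y * f y + g y * g y) x (2 * f x * df + 2 * g x * dg).
Proof.
  intros Hf Hg.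
  replace (2 * f x * df + 2 * g x * dg) with (df * f x + f x * df + (dg * g x + g x * dg)) by ring.
  apply (derivable_pt_lim_plus (fun y => f y * f y) (fun y => g y * g y));
    apply derivable_pt_lim_mult; assumption.
Qed.

Lemma energy_rate_bound K M mu hx rx u v z : 0 < hx <= K -> 0 <= - rx <= K -> 0 <= mu <= M ->
  2 * u * (hx * v) + 2 * v * (mu * rx * u + z) <= (K * (1 + M) + 1) * (u * u + v * v) + z * z.
Proof.
  intros Hh Hr Hmu.
  assert (E1 : 2 * u * v <= u * u + v * v) by (pose proof (Rle_0_sqr (u - v)); unfold Rsqr in *; nra).
  assert (E2 : - (2 * u * v) <= u * u + v * v) by (pose proof (Rle_0_sqr (u + v)); unfold Rsqr in *; nra).
  assert (E3 : 2 * v * z <= v * v + z * z) by (pose proof (Rle_0_sqr (v - z)); unfold Rsqr in *; nra).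
  assert (T1 : hx * (2 * u * v) <= K * (u * u + v * v)) by nra.
  assert (T2 : (mu * - rx) * - (2 * u * v) <= M * K * (u * u + v * v)).
  { assert (0 <= mu * - rx <= M * K) by (split; nra). nra. }
  assert (0 <= u * u + v * v) by nra.
  nra.
Qed.

(* First-order form of the problem: [w mu = Phi(.;mu)], [F mu = Phi_p(.;mu) / H_p^3] is the flux,
   [h = H_p^3], [r = rho_p], [c0 = 1 / H_p(-1)^3], [rho0 = rho(0)] and
   [boundary_defect = A]. *)
Section FluxSystem.

Variables (a b c0 rho0 : R) (h r : R -> R) (w F : R -> R -> R).
Hypothesis a_lt_b : a < b.
Hypothesis c0_pos : 0 < c0.
Hypothesis rho0_pos : 0 < rho0.
Hypothesis h_pos : forall p, a <= p <= b -> 0 < h p.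
Hypothesis r_nonpos : forall p, a <= p <= b -> r p <= 0.
Hypothesis h_cont : continuity_on a b h.
Hypothesis r_cont : continuity_on a b r.
Hypothesis w_cont : forall mu, 0 <= mu -> continuity_on a b (w mu).
Hypothesis F_cont : forall mu, 0 <= mu -> continuity_on a b (F mu).
Hypothesis w_deriv :
  forall mu x, 0 <= mu -> a < x < b -> derivable_pt_lim (w mu) x (h x * F mu x).
Hypothesis F_deriv :
  forall mu x, 0 <= mu -> a < x < b -> derivable_pt_lim (F mu) x (mu * r x * w mu x).
Hypothesis w_init : forall mu, 0 <= mu -> w mu a = 0.
Hypothesis F_init : forall mu, 0 <= mu -> F mu a = c0.

Definition boundary_defect (mu : R) : R := - F mu b + mu * rho0 * w mu b.

Lemma F_at_zero p : a <= p <= b -> F 0 p = c0.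
Proof.
  intros Hp. destruct (Req_dec p a) as [->|Hne]; [apply F_init; lra|].
  destruct (MVT_on a b (F 0) (fun x => 0 * r x * w 0 x) a p) as [c [_ E]];
    [lra | lra | apply F_cont; lra | intros; apply F_deriv; lra |].
  rewrite F_init in E; lra.
Qed.

Section NonnegativeFlux.

Variable mu : R.
Hypothesis mu_nonneg : 0 <= mu.
Hypothesis F_nonneg : forall p, a <= p <= b -> 0 <= F mu p.

Lemma w_nondecreasing x y : a <= x <= y -> y <= b -> w mu x <= w mu y.
Proof.
  intros Hx Hy. destruct (Req_dec x y) as [->|Hne]; [lra|].
  destruct (MVT_on a b (w mu) (fun z => h z * F mu z) x y) as [c [Hc E]];
    [lra | lra | apply w_cont; lra | intros; apply w_deriv; lra |].
  pose proof (h_pos c ltac:(lra)). pose proof (F_nonneg c ltac:(lra)).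
  assert (0 <= h c * F mu c) by nra. nra.
Qed.

Lemma w_nonneg p : a <= p <= b -> 0 <= w mu p.
Proof. intros Hp. rewrite <- (w_init mu mu_nonneg). apply w_nondecreasing; lra. Qed.

Lemma F_nonincreasing x y : a <= x <= y -> y <= b -> F mu y <= F mu x.
Proof.
  intros Hx Hy. destruct (Req_dec x y) as [->|Hne]; [lra|].
  destruct (MVT_on a b (F mu) (fun z => mu * r z * w mu z) x y) as [c [Hc E]];
    [lra | lra | apply F_cont; lra | intros; apply F_deriv; lra |].
  pose proof (r_nonpos c ltac:(lra)). pose proof (w_nonneg c ltac:(lra)).
  assert (mu * r c * w mu c <= 0) by (assert (mu * r c <= 0) by nra; nra). nra.
Qed.

End NonnegativeFlux.

Lemma w_pos mu p : 0 <= mu -> a < p <= b -> (forall q, a <= q <= p -> 0 < F mu q) -> 0 < w mu p.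
Proof.
  intros Hmu Hp HF.
  destruct (MVT_on a b (w mu) (fun z => h z * F mu z) a p) as [c [Hc E]];
    [lra | lra | apply w_cont; lra | intros; apply w_deriv; lra |].
  rewrite w_init in E by lra.
  pose proof (h_pos c ltac:(lra)). pose proof (HF c Hc).
  assert (0 < h c * F mu c) by nra. nra.
Qed.

(* The flux starts at [c0 > 0], so [w] grows strictly near [a]. *)
Lemma w_end_pos mu : 0 <= mu -> (forall p, a <= p <= b -> 0 <= F mu p) -> 0 < w mu b.
Proof.
  intros Hmu HF.
  destruct (continuity_on_locally_pos a b (F mu) a (F_cont mu Hmu))
    as [d [Hd Hnear]]; [lra | rewrite F_init; lra |].
  set (p0 := a + Rmin d (b - a) / 2).
  assert (Hm : 0 < Rmin d (b - a)) by (apply Rmin_pos; lra).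
  pose proof (Rmin_l d (b - a)). pose proof (Rmin_r d (b - a)).
  assert (0 < w mu p0).
  { apply w_pos; [exact Hmu | unfold p0; lra |]. intros q Hq. apply Hnear; [unfold p0 in Hq; lra|].
    rewrite Rabs_right; unfold p0 in Hq; lra. }
  pose proof (w_nondecreasing mu Hmu HF p0 b ltac:(unfold p0; lra) ltac:(lra)). lra.
Qed.

Lemma F_pos_of_defect_nonpos mu : 0 < mu -> (forall p, a <= p <= b -> 0 <= F mu p) ->
  boundary_defect mu <= 0 -> forall p, a <= p <= b -> 0 < F mu p.
Proof.
  intros Hmu HF HA p Hp. destruct (Rlt_dec 0 (F mu p)) as [|Hn]; [assumption|]. exfalso.
  assert (HFb : F mu b = 0).
  { pose proof (F_nonincreasing mu ltac:(lra) HF p b ltac:(lra) ltac:(lra)).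
    pose proof (HF b ltac:(lra)). lra. }
  pose proof (w_end_pos mu ltac:(lra) HF).
  unfold boundary_defect in HA. rewrite HFb in HA.
  assert (0 < mu * rho0 * w mu b) by (apply Rmult_lt_0_compat; [nra | assumption]). lra.
Qed.

Lemma defect_nonneg_of_large mu m : 0 < m -> (forall p, a <= p <= b -> m <= h p) ->
  1 <= mu * rho0 * m * (b - a) -> (forall p, a <= p <= b -> 0 < F mu p) ->
  0 <= boundary_defect mu.
Proof.
  intros Hm Hh Hlarge HF.
  assert (Hmu : 0 <= mu).
  { destruct (Rle_dec 0 mu) as [|Hn]; [assumption|].
    assert (0 < rho0 * m * (b - a)) by (apply Rmult_lt_0_compat; nra). nra. }
  destruct (MVT_on a b (w mu) (fun z => h z * F mu z) a b) as [c [Hc E]];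
    [lra | lra | apply w_cont; lra | intros; apply w_deriv; lra |].
  rewrite w_init in E by lra.
  pose proof (F_nonincreasing mu Hmu (fun p Hp => Rlt_le _ _ (HF p Hp)) c b ltac:(lra) ltac:(lra)).
  pose proof (HF b ltac:(lra)). pose proof (Hh c Hc).
  assert (Hwb : m * F mu b * (b - a) <= w mu b).
  { replace (w mu b) with (h c * F mu c * (b - a)) by lra.
    apply Rmult_le_compat_r; [lra|]. apply Rmult_le_compat; lra. }
  unfold boundary_defect.
  assert (F mu b <= mu * rho0 * (m * F mu b * (b - a))) by nra.
  assert (mu * rho0 * (m * F mu b * (b - a)) <= mu * rho0 * w mu b)
    by (apply Rmult_le_compat_l; nra).
  lra.
Qed.

Lemma coefficient_bound :
  exists K, 0 < K /\ forall p, a <= p <= b -> h p <= K /\ - r p <= K.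
Proof.
  destruct (continuity_on_max a b a_lt_b h h_cont) as [Mh HMh].
  destruct (continuity_on_max a b a_lt_b (fun p => - r p)) as [Mr HMr].
  { intros x. apply continuity_pt_opp, r_cont. }
  pose proof (Rle_abs Mh). pose proof (Rle_abs Mr).
  pose proof (Rabs_pos Mh). pose proof (Rabs_pos Mr).
  exists (Rabs Mh + Rabs Mr + 1). split; [lra|].
  intros p Hp. pose proof (HMh p Hp). pose proof (HMr p Hp). lra.
Qed.

Lemma energy_bound M : 0 <= M -> exists B, 0 <= B /\ forall mu p, 0 <= mu <= M -> a <= p <= b ->
  w mu p * w mu p + F mu p * F mu p <= B.
Proof.
  intros HM. destruct coefficient_bound as [K [HK Hcoef]].
  set (G := K * (1 + M) + 1).
  assert (HG : 0 < G) by (unfold G; nra).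
  exists (exp (G * (b - a)) * (c0 * c0 + 0 / G)). split.
  { replace (0 / G) with 0 by (field; lra). pose proof (exp_pos (G * (b - a))). nra. }
  intros mu p Hmu Hp.
  replace (c0 * c0) with (w mu a * w mu a + F mu a * F mu a)
    by (rewrite w_init, F_init by lra; ring).
  apply (gronwall_on a b a_lt_b (fun y => w mu y * w mu y + F mu y * F mu y)
    (fun y => 2 * w mu y * (h y * F mu y) + 2 * F mu y * (mu * r y * w mu y)) G 0 p HG);
    [lra | apply Rplus_le_le_0_compat; apply Rle_0_sqr | exact Hp | | |].
  - intros x. apply continuity_pt_sum_sqr; [apply (w_cont mu) | apply (F_cont mu)]; lra.
  - intros x Hx. apply derivable_pt_lim_sum_sqr; [apply w_deriv | apply F_deriv]; lra.
  - intros x Hx. cbv beta. destruct (Hcoef x Hx) as [Hh Hr]. pose proof (r_nonpos x Hx).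
    pose proof (energy_rate_bound K M mu (h x) (r x) (w mu x) (F mu x) 0
                  (conj (h_pos x Hx) Hh) ltac:(lra) Hmu).
    replace (mu * r x * w mu x) with (mu * r x * w mu x + 0) by ring. unfold G. lra.
Qed.

Lemma difference_energy_bound M : 0 <= M -> exists L, 0 <= L /\ forall mu1 mu2 p,
  0 <= mu1 <= M -> 0 <= mu2 <= M -> a <= p <= b ->
  (w mu1 p - w mu2 p) * (w mu1 p - w mu2 p) + (F mu1 p - F mu2 p) * (F mu1 p - F mu2 p)
    <= L * ((mu1 - mu2) * (mu1 - mu2)).
Proof.
  intros HM. destruct coefficient_bound as [K [HK Hcoef]].
  destruct (energy_bound M HM) as [B [HB Hen]].
  set (G := K * (1 + M) + 1).
  assert (HG : 0 < G) by (unfold G; nra).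
  exists (exp (G * (b - a)) * (K * K * B / G)). split.
  { pose proof (exp_pos (G * (b - a))).
    assert (0 <= K * K * B / G) by (apply Rdiv_le_0_compat; nra). nra. }
  intros mu1 mu2 p Hmu1 Hmu2 Hp. set (d := mu1 - mu2).
  replace (exp (G * (b - a)) * (K * K * B / G) * (d * d)) with
    (exp (G * (b - a)) * ((w mu1 a - w mu2 a) * (w mu1 a - w mu2 a)
       + (F mu1 a - F mu2 a) * (F mu1 a - F mu2 a) + K * K * B * (d * d) / G))
    by (rewrite !w_init, !F_init by lra; field; lra).
  apply (gronwall_on a b a_lt_b
    (fun y => (w mu1 y - w mu2 y) * (w mu1 y - w mu2 y) + (F mu1 y - F mu2 y) * (F mu1 y - F mu2 y))
    (fun y => 2 * (w mu1 y - w mu2 y) * (h y * F mu1 y - h y * F mu2 y)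
              + 2 * (F mu1 y - F mu2 y) * (mu1 * r y * w mu1 y - mu2 * r y * w mu2 y))
    G (K * K * B * (d * d)) p HG);
    [apply Rmult_le_pos; [nra | apply Rle_0_sqr] | apply Rplus_le_le_0_compat; apply Rle_0_sqr
    | exact Hp | | |].
  - intros x.
    apply (continuity_pt_sum_sqr (fun y => w mu1 (clamp a b y) - w mu2 (clamp a b y))
                                 (fun y => F mu1 (clamp a b y) - F mu2 (clamp a b y)));
      apply continuity_pt_minus;
      solve [apply (w_cont mu1); lra | apply (w_cont mu2); lra
            | apply (F_cont mu1); lra | apply (F_cont mu2); lra].
  - intros x Hx.
    apply (derivable_pt_lim_sum_sqr (fun y => w mu1 y - w mu2 y) (fun y => F mu1 y - F mu2 y));
      apply derivable_pt_lim_minus;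
      solve [apply w_deriv; lra | apply F_deriv; lra].
  - intros x Hx. destruct (Hcoef x Hx) as [Hh Hr]. pose proof (r_nonpos x Hx).
    set (z := r x * d * w mu2 x).
    pose proof (energy_rate_bound K M mu1 (h x) (r x) (w mu1 x - w mu2 x) (F mu1 x - F mu2 x) z
                  (conj (h_pos x Hx) Hh) ltac:(lra) Hmu1).
    assert (Hz : z * z <= K * K * B * (d * d)).
    { unfold z. replace (r x * d * w mu2 x * (r x * d * w mu2 x))
        with ((r x * r x) * (w mu2 x * w mu2 x) * (d * d)) by ring.
      pose proof (Hen mu2 x Hmu2 Hx). pose proof (Rle_0_sqr d). unfold Rsqr in *.
      assert (r x * r x <= K * K) by nra.
      apply Rmult_le_compat_r; [lra|]. apply Rmult_le_compat; nra. }
    replace (mu1 * r x * w mu1 x - mu2 * r x * w mu2 x)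
      with (mu1 * r x * (w mu1 x - w mu2 x) + z) by (unfold z, d; ring).
    replace (h x * F mu1 x - h x * F mu2 x) with (h x * (F mu1 x - F mu2 x)) by ring.
    unfold G. lra.
Qed.

Lemma state_lipschitz M : 0 <= M -> exists L, 0 <= L /\ forall mu1 mu2 p,
  0 <= mu1 <= M -> 0 <= mu2 <= M -> a <= p <= b ->
  Rabs (w mu1 p - w mu2 p) <= L * Rabs (mu1 - mu2) /\
  Rabs (F mu1 p - F mu2 p) <= L * Rabs (mu1 - mu2).
Proof.
  intros HM. destruct (difference_energy_bound M HM) as [L [HL Hdiff]].
  exists (L + 1). split; [lra|]. intros mu1 mu2 p H1 H2 Hp.
  pose proof (Hdiff mu1 mu2 p H1 H2 Hp).
  pose proof (Rle_0_sqr (w mu1 p - w mu2 p)). pose proof (Rle_0_sqr (F mu1 p - F mu2 p)).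
  unfold Rsqr in *.
  split; apply Rabs_le_of_sqr_le; lra.
Qed.

Lemma defect_lipschitz M : 0 <= M -> exists L, 0 <= L /\ forall mu1 mu2,
  0 <= mu1 <= M -> 0 <= mu2 <= M ->
  Rabs (boundary_defect mu1 - boundary_defect mu2) <= L * Rabs (mu1 - mu2).
Proof.
  intros HM. destruct (state_lipschitz M HM) as [L [HL Hlip]].
  destruct (energy_bound M HM) as [B [HB Hen]].
  exists (L + rho0 * (M * L + (B + 1))). split; [assert (0 <= M * L) by nra; nra|].
  intros mu1 mu2 H1 H2.
  destruct (Hlip mu1 mu2 b H1 H2 ltac:(lra)) as [Hw HF].
  assert (Hwb : Rabs (w mu2 b) <= B + 1).
  { replace (B + 1) with ((B + 1) * Rabs 1) by (rewrite Rabs_R1; ring).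
    apply Rabs_le_of_sqr_le; [exact HB|].
    pose proof (Hen mu2 b H2 ltac:(lra)). pose proof (Rle_0_sqr (F mu2 b)). unfold Rsqr in *. lra. }
  unfold boundary_defect.
  replace (- F mu1 b + mu1 * rho0 * w mu1 b - (- F mu2 b + mu2 * rho0 * w mu2 b)) with
    (- (F mu1 b - F mu2 b) + rho0 * (mu1 * (w mu1 b - w mu2 b) + (mu1 - mu2) * w mu2 b)) by ring.
  eapply Rle_trans; [apply Rabs_triang|]. rewrite Rabs_Ropp, Rabs_mult, (Rabs_pos_eq rho0) by lra.
  pose proof (Rabs_pos (w mu1 b - w mu2 b)). pose proof (Rabs_pos (mu1 - mu2)).
  assert (Rabs (mu1 * (w mu1 b - w mu2 b) + (mu1 - mu2) * w mu2 b)
          <= M * (L * Rabs (mu1 - mu2)) + Rabs (mu1 - mu2) * (B + 1)).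
  { eapply Rle_trans; [apply Rabs_triang|]. rewrite !Rabs_mult, (Rabs_pos_eq mu1) by lra.
    apply Rplus_le_compat; [apply Rmult_le_compat; lra | apply Rmult_le_compat_l; lra]. }
  nra.
Qed.

Lemma param_continuity mu eps : 0 <= mu -> 0 < eps -> exists delta, 0 < delta /\
  forall mu', 0 <= mu' -> Rabs (mu' - mu) < delta ->
  (forall p, a <= p <= b -> Rabs (F mu' p - F mu p) < eps) /\
  Rabs (boundary_defect mu' - boundary_defect mu) < eps.
Proof.
  intros Hmu Heps.
  destruct (state_lipschitz (mu + 1) ltac:(lra)) as [L1 [HL1 Hstate]].
  destruct (defect_lipschitz (mu + 1) ltac:(lra)) as [L2 [HL2 Hdefect]].
  set (L := L1 + L2 + 1).
  assert (HL : 0 < L) by (unfold L; lra).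
  exists (Rmin 1 (eps / L)). split; [apply Rmin_pos; [lra | apply Rdiv_lt_0_compat; lra]|].
  intros mu' Hmu' Hd. pose proof (Rmin_l 1 (eps / L)). pose proof (Rmin_r 1 (eps / L)).
  assert (Hrange : 0 <= mu' <= mu + 1) by (revert Hd; unfold Rabs; destruct Rcase_abs; lra).
  assert (Hsmall : L * Rabs (mu' - mu) < eps).
  { replace eps with (L * (eps / L)) by (field; lra). apply Rmult_lt_compat_l; lra. }
  pose proof (Rabs_pos (mu' - mu)).
  split.
  - intros p Hp. destruct (Hstate mu' mu p Hrange ltac:(lra) Hp) as [_ HF]. unfold L in Hsmall. nra.
  - pose proof (Hdefect mu' mu Hrange ltac:(lra)). unfold L in Hsmall. nra.
Qed.

Definition subcritical (mu : R) : Prop :=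
  0 <= mu /\ boundary_defect mu < 0 /\ forall p, a <= p <= b -> 0 < F mu p.

Lemma subcritical_0 : subcritical 0.
Proof.
  split; [lra | split].
  - unfold boundary_defect. rewrite F_at_zero by lra. lra.
  - intros p Hp. rewrite F_at_zero by exact Hp. exact c0_pos.
Qed.

Lemma subcritical_open mu : subcritical mu ->
  exists e, 0 < e /\ forall mu', 0 <= mu' -> Rabs (mu' - mu) < e -> subcritical mu'.
Proof.
  intros [Hmu [HA HF]].
  destruct (continuity_on_pos_min a b a_lt_b (F mu) (F_cont mu Hmu) HF) as [m [Hm HFm]].
  destruct (param_continuity mu (Rmin m (- boundary_defect mu)) Hmu)
    as [e [He Hnear]]; [apply Rmin_pos; lra|].
  pose proof (Rmin_l m (- boundary_defect mu)). pose proof (Rmin_r m (- boundary_defect mu)).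
  exists e. split; [exact He|]. intros mu' Hmu' Hd.
  destruct (Hnear mu' Hmu' Hd) as [HFnear HAnear].
  split; [exact Hmu' | split].
  - revert HAnear. unfold Rabs; destruct Rcase_abs; lra.
  - intros p Hp. pose proof (HFnear p Hp) as Hclose. pose proof (HFm p Hp).
    revert Hclose. unfold Rabs; destruct Rcase_abs; lra.
Qed.

Lemma subcritical_closure m : 0 < m -> (forall mu, 0 <= mu < m -> subcritical mu) ->
  boundary_defect m <= 0 /\ forall p, a <= p <= b -> 0 <= F m p.
Proof.
  intros Hm Hbelow.
  assert (Happrox : forall e, 0 < e -> exists mu, 0 <= mu < m /\ Rabs (mu - m) < e).
  { intros e He. exists (m - Rmin e m / 2).
    assert (0 < Rmin e m) by (apply Rmin_pos; lra).
    pose proof (Rmin_l e m). pose proof (Rmin_r e m).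
    replace (m - Rmin e m / 2 - m) with (- (Rmin e m / 2)) by ring.
    rewrite Rabs_Ropp, Rabs_right by lra. lra. }
  split.
  - destruct (Rle_dec (boundary_defect m) 0) as [|Hn]; [assumption|]. exfalso.
    destruct (param_continuity m (boundary_defect m) ltac:(lra) ltac:(lra)) as [e [He Hnear]].
    destruct (Happrox e He) as [mu [Hmu Hd]].
    destruct (Hbelow mu Hmu) as [_ [HA _]]. destruct (Hnear mu ltac:(lra) Hd) as [_ HAnear].
    revert HAnear. unfold Rabs; destruct Rcase_abs; lra.
  - intros p Hp. destruct (Rle_dec 0 (F m p)) as [|Hn]; [assumption|]. exfalso.
    destruct (param_continuity m (- F m p) ltac:(lra) ltac:(lra)) as [e [He Hnear]].
    destruct (Happrox e He) as [mu [Hmu Hd]].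
    destruct (Hbelow mu Hmu) as [_ [_ HF]]. destruct (Hnear mu ltac:(lra) Hd) as [HFnear _].
    pose proof (HF p Hp). pose proof (HFnear p Hp) as Hclose.
    revert Hclose. unfold Rabs; destruct Rcase_abs; lra.
Qed.

Lemma exists_not_subcritical : exists mu, 0 < mu /\ ~ subcritical mu.
Proof.
  destruct (continuity_on_pos_min a b a_lt_b h h_cont h_pos) as [m [Hm Hhm]].
  assert (Hprod : 0 < rho0 * m * (b - a)) by (apply Rmult_lt_0_compat; nra).
  exists (1 / (rho0 * m * (b - a))). split; [apply Rdiv_lt_0_compat; lra|].
  intros [_ [HA HF]].
  assert (0 <= boundary_defect (1 / (rho0 * m * (b - a)))); [|lra].
  apply (defect_nonneg_of_large _ m Hm Hhm); [| exact HF].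
  replace (1 / (rho0 * m * (b - a)) * rho0 * m * (b - a)) with 1 by (field; lra). lra.
Qed.

Lemma subcritical_supremum : exists mucr, 0 < mucr /\
  (forall mu, 0 <= mu < mucr -> subcritical mu) /\ ~ subcritical mucr.
Proof.
  set (stable := fun m => 0 <= m /\ forall mu, 0 <= mu <= m -> subcritical mu).
  assert (Hstable0 : stable 0).
  { split; [lra|]. intros mu Hmu. replace mu with 0 by lra. exact subcritical_0. }
  destruct exists_not_subcritical as [mu1 [Hmu1 Hnot1]].
  destruct (completeness stable) as [mucr [Hub Hlub]]; [| exists 0; exact Hstable0 |].
  { exists mu1. intros m [Hm Hsub]. destruct (Rle_dec m mu1) as [|Hn]; [assumption|].
    exfalso. apply Hnot1, Hsub. lra. }
  assert (Hnonneg : 0 <= mucr) by (apply Hub, Hstable0).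
  assert (Hbelow : forall mu, 0 <= mu < mucr -> subcritical mu).
  { intros mu Hmu. destruct (classic (subcritical mu)) as [|Hn]; [assumption|]. exfalso.
    assert (mucr <= mu); [|lra]. apply Hlub. intros m [Hm Hsub].
    destruct (Rle_dec m mu) as [|Hn']; [assumption|]. exfalso. apply Hn, Hsub. lra. }
  assert (Hnot_open : forall e, 0 < e ->
            ~ (forall mu, 0 <= mu -> Rabs (mu - mucr) < e -> subcritical mu)).
  { intros e He Hnear.
    assert (Hst : stable (mucr + e / 2)); [|pose proof (Hub _ Hst); lra].
    split; [lra|]. intros mu Hmu. destruct (Rlt_le_dec mu mucr); [apply Hbelow; lra|].
    apply Hnear; [lra|]. rewrite Rabs_right; lra. }
  assert (Hpos : 0 < mucr).
  { destruct (Rlt_dec 0 mucr) as [|Hn]; [assumption|]. exfalso.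
    destruct (subcritical_open 0 subcritical_0) as [e [He Hnear]].
    apply (Hnot_open e He). replace mucr with 0 by lra. exact Hnear. }
  exists mucr. split; [exact Hpos | split; [exact Hbelow|]].
  intros Hsub. destruct (subcritical_open mucr Hsub) as [e [He Hnear]].
  exact (Hnot_open e He Hnear).
Qed.

Lemma critical_parameter : exists mucr, 0 < mucr /\ boundary_defect mucr = 0 /\
  (forall mu, 0 <= mu <= mucr ->
     (forall p, a < p <= b -> 0 < w mu p) /\ (forall p, a <= p <= b -> 0 < F mu p)) /\
  (forall mu, 0 <= mu < mucr -> boundary_defect mu < 0).
Proof.
  destruct subcritical_supremum as [mucr [Hpos [Hbelow Hnot]]].
  destruct (subcritical_closure mucr Hpos Hbelow) as [HA HF].
  pose proof (F_pos_of_defect_nonpos mucr Hpos HF HA) as HFpos.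
  assert (HA0 : boundary_defect mucr = 0).
  { destruct (Rlt_dec (boundary_defect mucr) 0) as [Hlt|Hn]; [|lra].
    exfalso. exact (Hnot (conj (Rlt_le _ _ Hpos) (conj Hlt HFpos))). }
  exists mucr. split; [exact Hpos | split; [exact HA0 | split]].
  - intros mu Hmu.
    assert (HFmu : forall p, a <= p <= b -> 0 < F mu p).
    { destruct (Req_dec mu mucr) as [->|]; [exact HFpos | apply Hbelow; lra]. }
    split; [| exact HFmu].
    intros p Hp. apply w_pos; [lra | exact Hp |]. intros q Hq. apply HFmu; lra.
  - intros mu Hmu. apply Hbelow, Hmu.
Qed.

End FluxSystem.

Lemma deriv_at_derivable_pt_lim f x l : deriv_at f x l -> derivable_pt_lim f x l.
Proof.
  intros Hd eps Heps. destruct (Hd eps Heps) as [d [Hd0 H]].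
  exists (mkposreal _ Hd0). intros t Ht0 Ht. simpl in Ht.
  specialize (H (x + t)). replace (x + t - x) with t in H by ring. apply H; [lra | exact Ht].
Qed.

Lemma continuity_pt_pow_fun f n x : continuity_pt f x -> continuity_pt (fun y => f y ^ n) x.
Proof.
  intros Hf. induction n as [|n IH]; simpl.
  - apply continuity_pt_const. intros ? ?. reflexivity.
  - apply continuity_pt_mult; assumption.
Qed.

Lemma ode_sol_flux_form Hp rhop mu w wp :
  continuity_on (-1) 0 Hp -> (forall p, -1 <= p <= 0 -> 0 < Hp p) -> ode_sol Hp rhop mu w wp ->
  continuity_on (-1) 0 w /\ continuity_on (-1) 0 (fun p => wp p / Hp p ^ 3) /\
  (forall x, -1 < x < 0 -> derivable_pt_lim w x (Hp x ^ 3 * (wp x / Hp x ^ 3))) /\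
  (forall x, -1 < x < 0 -> derivable_pt_lim (fun p => wp p / Hp p ^ 3) x (mu * rhop x * w x)).
Proof.
  intros Hcont Hpos [Hw [Hwp Hflux]].
  split; [| split; [| split]].
  - apply (continuity_on_of_within (-1) 0); [lra|]. intros x Hx.
    exact (deriv_within_continuous _ _ _ _ _ (Hw x Hx)).
  - intros x. apply continuity_pt_div.
    + apply (continuity_on_of_within (-1) 0); [lra | exact Hwp].
    + apply continuity_pt_pow_fun, Hcont.
    + apply pow_nonzero. pose proof (Hpos _ (clamp_in (-1) 0 ltac:(lra) x)). lra.
  - intros x Hx. pose proof (Hpos x ltac:(lra)).
    replace (Hp x ^ 3 * (wp x / Hp x ^ 3)) with (wp x) by (field; lra).
    apply (deriv_within_interior (-1) 0); [exact Hx | apply Hw; lra].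
  - intros x Hx. apply deriv_at_derivable_pt_lim, Hflux, Hx.
Qed.

Lemma Afun_eq_boundary_defect rho Hp Phi Phip mu :
  Afun rho Hp Phi Phip mu =
  boundary_defect 0 (rho 0) (fun mu p => Phi p mu) (fun mu p => Phip p mu / Hp p ^ 3) mu.
Proof. unfold Afun, boundary_defect, Rdiv. ring. Qed.

Lemma first_zero_unique (A : R -> R) m1 m2 : A m1 = 0 -> A m2 = 0 ->
  0 <= m1 -> (forall mu, 0 <= mu < m1 -> A mu < 0) ->
  0 <= m2 -> (forall mu, 0 <= mu < m2 -> A mu < 0) -> m1 = m2.
Proof.
  intros H1 H2 Hm1 Hneg1 Hm2 Hneg2.
  destruct (Rtotal_order m1 m2) as [Hlt|[Heq|Hgt]]; [| exact Heq |].
  - specialize (Hneg2 m1 ltac:(lra)). lra.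
  - specialize (Hneg1 m2 ltac:(lra)). lra.
Qed.

Lemma ivp_critical_parameter rho rhop Hp Phi Phip :
  continuity_on (-1) 0 Hp -> continuity_on (-1) 0 rhop ->
  (forall p, -1 <= p <= 0 -> 0 < rho p) ->
  (forall p, -1 <= p <= 0 -> rhop p <= 0) ->
  (forall p, -1 <= p <= 0 -> 0 < Hp p) ->
  (forall mu, 0 <= mu ->
     ode_sol Hp rhop mu (fun p => Phi p mu) (fun p => Phip p mu) /\
     Phi (-1) mu = 0 /\ Phip (-1) mu = 1) ->
  exists mucr, 0 < mucr /\ Afun rho Hp Phi Phip mucr = 0 /\
    (forall mu, 0 <= mu <= mucr ->
       (forall p, -1 < p <= 0 -> 0 < Phi p mu) /\ (forall p, -1 <= p <= 0 -> 0 < Phip p mu)) /\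
    (forall mu, 0 <= mu < mucr -> Afun rho Hp Phi Phip mu < 0).
Proof.
  intros Hp_cont rhop_cont rho_pos rhop_nonpos Hp_pos Hivp.
  assert (Hp3_pos : forall p, -1 <= p <= 0 -> 0 < Hp p ^ 3) by (intros p Hp'; apply pow_lt, Hp_pos, Hp').
  assert (Hflux : forall mu, 0 <= mu -> _)
    by (intros mu Hmu; exact (ode_sol_flux_form _ _ _ _ _ Hp_cont Hp_pos (proj1 (Hivp mu Hmu)))).
  destruct (critical_parameter (-1) 0 (1 / Hp (-1) ^ 3) (rho 0) (fun p => Hp p ^ 3) rhop
              (fun mu p => Phi p mu) (fun mu p => Phip p mu / Hp p ^ 3))
    as [mucr [Hmucr [HA [Hpos Hneg]]]];
    [ lra | apply Rdiv_lt_0_compat; [lra | apply Hp3_pos; lra] | apply rho_pos; lra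
    | exact Hp3_pos | exact rhop_nonpos | intros x; apply continuity_pt_pow_fun, Hp_cont
    | exact rhop_cont
    | intros mu Hmu; destruct (Hflux mu Hmu) as [Hc _]; exact Hc
    | intros mu Hmu; destruct (Hflux mu Hmu) as [_ [Hc _]]; exact Hc
    | intros mu x Hmu Hx; destruct (Hflux mu Hmu) as [_ [_ [Hd _]]]; exact (Hd x Hx)
    | intros mu x Hmu Hx; destruct (Hflux mu Hmu) as [_ [_ [_ Hd]]]; exact (Hd x Hx)
    | intros mu Hmu; apply (Hivp mu Hmu)
    | intros mu Hmu; cbv beta; rewrite (proj2 (proj2 (Hivp mu Hmu))); reflexivity |].
  exists mucr. split; [exact Hmucr | split; [rewrite Afun_eq_boundary_defect; exact HA | split]].
  - intros mu Hmu. destruct (Hpos mu Hmu) as [Hw HF]. split; [exact Hw|].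
    intros p Hp'. specialize (HF p Hp'). pose proof (Hp3_pos p Hp'). pose proof (Hp_pos p Hp').
    replace (Phip p mu) with (Hp p ^ 3 * (Phip p mu / Hp p ^ 3)) by (field; lra).
    apply Rmult_lt_0_compat; assumption.
  - intros mu Hmu. rewrite Afun_eq_boundary_defect. apply Hneg, Hmu.
Qed.

Theorem lemma3p1 (alpha : R) (rho rhop H Hp : R -> R) (Phi Phip : R -> R -> R) :
  0 < alpha < 1 ->
  Ckalpha 2 alpha (-1) 0 rho ->
  Ckalpha 3 alpha (-1) 0 H ->
  (forall p, -1 <= p <= 0 -> deriv_within (-1) 0 rho p (rhop p)) ->
  (forall p, -1 <= p <= 0 -> deriv_within (-1) 0 H p (Hp p)) ->
  (forall p, -1 <= p <= 0 -> 0 < rho p) ->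
  (forall p, -1 <= p <= 0 -> rhop p <= 0) ->
  (forall p, -1 <= p <= 0 -> 0 < Hp p) ->
  (* Phi(.;mu) solves the initial value problem, Phip(.;mu) its p-derivative *)
  (forall mu, 0 <= mu ->
     ode_sol Hp rhop mu (fun p => Phi p mu) (fun p => Phip p mu) /\
     Phi (-1) mu = 0 /\ Phip (-1) mu = 1) ->
  exists! mucr, 0 < mucr /\
    (* (a) *)
    ((exists w wp, bvp_sol rho Hp rhop mucr w wp /\ nontrivial w) /\
     bvp_sol rho Hp rhop mucr (fun p => Phi p mucr) (fun p => Phip p mucr) /\
     nontrivial (fun p => Phi p mucr)) /\
    (* (b) *)
    (forall mu, 0 <= mu <= mucr ->
       (forall p, -1 < p <= 0 -> 0 < Phi p mu) /\
       (forall p, -1 <= p <= 0 -> 0 < Phip p mu)) /\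
    (* (c) *)
    (forall mu, 0 <= mu < mucr -> Afun rho Hp Phi Phip mu < 0).
Proof.
  intros _ Crho CH Drho DH rho_pos rhop_nonpos Hp_pos Hivp.
  destruct (ivp_critical_parameter rho rhop Hp Phi Phip) as [mucr [Hmucr [HA [Hpos Hneg]]]];
    [ exact (Ckalpha_deriv_continuity (-1) 0 ltac:(lra) 3 alpha H Hp ltac:(lia) CH DH)
    | exact (Ckalpha_deriv_continuity (-1) 0 ltac:(lra) 2 alpha rho rhop ltac:(lia) Crho Drho)
    | exact rho_pos | exact rhop_nonpos | exact Hp_pos | exact Hivp |].
  assert (Hbvp : bvp_sol rho Hp rhop mucr (fun p => Phi p mucr) (fun p => Phip p mucr)).
  { destruct (Hivp mucr ltac:(lra)) as [Hode [Hinit _]]. exact (conj Hode (conj Hinit HA)). }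
  assert (Hnontrivial : nontrivial (fun p => Phi p mucr)).
  { exists 0. split; [lra|]. pose proof (proj1 (Hpos mucr ltac:(lra)) 0 ltac:(lra)). lra. }
  exists mucr. split.
  - split; [exact Hmucr|]. split; [| split; assumption].
    split; [exists (fun p => Phi p mucr), (fun p => Phip p mucr) |]; split; assumption.
  - intros m [Hm [[_ [[_ [_ Hm0]] _]] [_ Hmneg]]].
    exact (first_zero_unique (Afun rho Hp Phi Phip) mucr m HA Hm0 ltac:(lra) Hneg ltac:(lra) Hmneg).
Qed.
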